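(* Consider the query incentive model on a deterministic chain (every node has exactly one child), with root at position $0$ and agents at positions $1,2,3,\dots$, where each agent independently holds an answer with probability $p=1/n$, and let $h\ge 1$ be the desired level to which the root wants to propagate the query. Then there exists a sybil-proof direct referral incentive mechanism whose expected cost is $O(nh^2)$.
   Context: Model. The root issues a query which is propagated down the chain. An oblivious reward scheme on the chain is a function $r(i,s)$ ($i\ge1$, $s\ge0$, $i+s\le h$): if the first answer in the chain is at position $i+s\le h$, then the agent at position $i$ receives $r(i,s)$ (so $r(i,0)$ is the reward of the answer holder); if no agent among positions $1,\dots,h$ holds an answer, nobody is paid. A direct referral (DR) mechanism is one in which $r(i,s)=1$ whenever $s\notin\{0,1\}$, i.e. only the first answer holder and its direct parent may receive more than one unit. The expected cost is $\mathbb{E}[\sum_{i=1}^{J} r(i,J-i)]$, where $J$ is the position of the first answer if $J\le h$ (and the sum is empty otherwise). Sybil attacks. An agent may create fake identities: if it holds no answer it may insert $k\ge0$ additional identities between itself and its successor (so its identities occupy $k+1$ consecutive positions and all later agents are shifted down by $k$); if it holds an answer it may create a chain of identities and place its answer at any of them. The payoff of an agent is the expected total reward collected by all of its identities, conditioned on its own answer status and on the event that no earlier agent holds an answer. The mechanism is sybil-proof (with level $h$) if the following profile is a Nash equilibrium: every agent at position $<h$ without an answer propagates the query and creates no sybil; every agent holding an answer reports it without creating sybils and does not propagate; the agent at position $h$ reports its answer if it has one and does not propagate; all agents forward the selected answer. *)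

From mathcomp Require Import all_boot all_order all_algebra.
Set Implicit Arguments. Unset Strict Implicit. Unset Printing Implicit Defensive.
Import Order.TTheory GRing.Theory Num.Theory.
Local Open Scope ring_scope.

(* An oblivious reward scheme on the chain: r i s is the reward of the agent
   at position i when the first answer is at position i + s.  Only the values
   with 1 <= i and i + s <= h are ever used. *)

Definition nonneg_reward (R : numDomainType) (h : nat) (r : nat -> nat -> R) :=
  forall i s : nat, (1 <= i)%N -> (i + s <= h)%N -> 0 <= r i s.

Definition is_DR (R : numDomainType) (h : nat) (r : nat -> nat -> R) :=
  forall i s : nat, (1 <= i)%N -> (i + s <= h)%N -> (2 <= s)%N -> r i s = 1.

Definition pay_sum (R : numDomainType) (r : nat -> nat -> R) (J : nat) : R :=
  \sum_(1 <= i < J.+1) r i (J - i)%N.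

Definition exp_cost (R : numDomainType) (p : R) (h : nat) (r : nat -> nat -> R) : R :=
  \sum_(1 <= J < h.+1) (1 - p) ^+ (J - 1) * p * pay_sum r J.

(* Payoff of an answer-holding agent at position i which creates a chain of
   identities at positions i, i+1, ..., and places its answer at identity
   i + m (m = 0: honest report without sybil). *)
Definition payoff_answer (R : numDomainType) (h : nat) (r : nat -> nat -> R)
    (i m : nat) : R :=
  if (i + m <= h)%N then \sum_(0 <= l < m.+1) r (i + l)%N (m - l)%N else 0.

(* Payoff of an agent at position i that propagates the query after inserting
   k sybils (identities at i..i+k, later agents shifted by k), all other agents
   following the profile.  The t-th successor (t >= 1) is the first answer
   holder with probability (1-p)^(t-1) p, and then sits at position i+t+k.
   k = 0: honest propagation without sybils. *)
Definition payoff_prop (R : numDomainType) (p : R) (h : nat) (r : nat -> nat -> R)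
    (i k : nat) : R :=
  \sum_(1 <= t < h.+1)
     (if (i + t + k <= h)%N then
        (1 - p) ^+ (t - 1) * p * \sum_(0 <= m < k.+1) r (i + m)%N (t + k - m)%N
      else 0).

(* Sybil-proofness with level h: the prescribed profile is a Nash equilibrium.
   For every position 1 <= i <= h (conditioned on no earlier answer):
   - an agent holding an answer prefers reporting it without sybils (payoff
     r i 0) to: doing nothing (payoff 0), placing its answer on any identity
     of a sybil chain, or withholding its answer and propagating with any
     number of sybils;
   - an agent without an answer prefers the prescribed action (propagate
     without sybils if i < h; for i = h this payoff is 0, i.e. not
     propagating) to doing nothing (payoff 0) and to propagating with any
     number k of sybils. *)
Definition sybil_proof (R : numDomainType) (p : R) (h : nat) (r : nat -> nat -> R) :=
  forall i : nat, (1 <= i)%N -> (i <= h)%N ->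
    [/\ 0 <= r i 0,
        (forall m : nat, payoff_answer h r i m <= r i 0),
        (forall k : nat, payoff_prop p h r i k <= r i 0),
        0 <= payoff_prop p h r i 0
      & (forall k : nat, payoff_prop p h r i k <= payoff_prop p h r i 0)].

(** The reward scheme pays the answer holder at position [i] the amount
    [(2nh + 1)(h - i) + 1], its direct parent [2n(h - i)] and every other
    referrer [1].  The parent's reward [2n(h - i)] becomes the sure amount
    [2(h - i)] once multiplied by the answer probability [1/n]; inserting [k]
    sybils moves the answer one step away from the parent, which costs
    [2(k + 1)] in that term while the [k + 1] identities gain at most [k + 2]
    from the referral chain, so honest propagation wins.  The answer holder's
    reward exceeds what any chain of its own identities could collect, since
    a referring identity earns at most [2nh + 1], which is exactly what the
    answer reward loses per position.  The same chain bound caps every total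
    payment by the answer holder's reward at position [1], which is
    [O(nh^2)]. *)
From mathcomp Require Import all_boot all_order all_algebra.
From mathcomp Require Import ring lra zify.
Import Order.TTheory GRing.Theory Num.Theory.
Set Implicit Arguments. Unset Strict Implicit.
Local Open Scope ring_scope.

Lemma geometric_weights_sum (R : comPzRingType) (p : R) (T : nat) :
  \sum_(1 <= t < T.+1) (1 - p) ^+ (t - 1) * p = 1 - (1 - p) ^+ T.
Proof.
elim: T => [|T IH]; first by rewrite big_geq // expr0 subrr.
by rewrite big_nat_recr //= IH subn1 /= exprS; ring.
Qed.

Section GeometricWeights.
Variables (R : realDomainType) (p : R).
Hypotheses (p_ge0 : 0 <= p) (p_le1 : p <= 1).

Lemma geometric_weight_ge0 (t : nat) : 0 <= (1 - p) ^+ (t - 1) * p.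
Proof. by rewrite mulr_ge0 // exprn_ge0 // subr_ge0. Qed.

Lemma geometric_weights_tail_le (T : nat) : (1 <= T)%N ->
  \sum_(2 <= t < T.+1) (1 - p) ^+ (t - 1) * p <= 1 - p.
Proof.
move=> T_ge1; have := geometric_weights_sum p T.
rewrite big_ltn ?ltnS // expr0 mul1r.
have : 0 <= (1 - p) ^+ T by rewrite exprn_ge0 // subr_ge0.
lra.
Qed.

Lemma geometric_average_le (T : nat) (f : nat -> R) (c : R) : 0 <= c ->
  (forall t, (1 <= t < T.+1)%N -> f t <= (1 - p) ^+ (t - 1) * p * c) ->
  \sum_(1 <= t < T.+1) f t <= c.
Proof.
move=> c_ge0 f_le; apply: le_trans (ler_sum_nat f_le) _.
rewrite -mulr_suml geometric_weights_sum.
have : 0 <= (1 - p) ^+ T by rewrite exprn_ge0 // subr_ge0.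
nra.
Qed.

End GeometricWeights.

(** [n] is the inverse of the answer probability and [h] the level. *)
Definition dr_reward (R : numDomainType) (n : R) (h i s : nat) : R :=
  if s == 0%N then (2 * n * h%:R + 1) * (h - i)%:R + 1
  else if s == 1%N then 2 * n * (h - i)%:R else 1.

Section DirectReferralReward.
Variables (R : realFieldType) (n : R) (h : nat).
Hypotheses (n_ge1 : 1 <= n) (h_ge1 : (1 <= h)%N).

Local Notation r := (dr_reward n h).

Let n_gt0 : 0 < n. Proof. by apply: lt_le_trans n_ge1. Qed.
Let n_ge0 : 0 <= n. Proof. exact: ltW. Qed.
Let n_neq0 : n != 0. Proof. exact: lt0r_neq0. Qed.
Let p_ge0 : 0 <= n^-1. Proof. by rewrite invr_ge0. Qed.
Let p_le1 : n^-1 <= 1. Proof. by rewrite invf_le1. Qed.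

Lemma dr_reward_ge0 (i s : nat) : 0 <= r i s.
Proof.
rewrite /dr_reward; case: ifP => _.
  by rewrite addr_ge0 // mulr_ge0 // addr_ge0 // !mulr_ge0.
by case: ifP => _ //; rewrite !mulr_ge0.
Qed.

Lemma dr_reward_is_DR : is_DR h r.
Proof.
move=> i s _ _ s_ge2; rewrite /dr_reward.
by rewrite ifN_eq; [rewrite ifN_eq //|]; apply/eqP; lia.
Qed.

Lemma dr_reward_referral_le (i s : nat) : (1 <= s)%N ->
  r i s <= 2 * n * (h - i)%:R + 1.
Proof.
move=> s_ge1; rewrite /dr_reward ifN_eq; last by apply/eqP; lia.
have : 0 <= 2 * n * (h - i)%:R by rewrite !mulr_ge0.
by case: ifP => _; lra.
Qed.

Lemma dr_reward_referral_le_max (i s : nat) : (1 <= s)%N ->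
  r i s <= 2 * n * h%:R + 1.
Proof.
move=> s_ge1; apply: le_trans (dr_reward_referral_le i s_ge1) _.
by rewrite lerD2r ler_wpM2l ?mulr_ge0 // ler_nat leq_subr.
Qed.

Lemma dr_reward_referral_le_report (i : nat) : 2 * n * (h - i)%:R + 1 <= r i 0.
Proof.
rewrite /dr_reward eqxx lerD2r.
have : 0 <= n * (h - i)%:R * (h%:R - 1) by rewrite !mulr_ge0 // subr_ge0 ler1n.
have : 0 <= (h - i)%:R :> R by [].
nra.
Qed.

Lemma chain_payment_le_report (i j : nat) : (i <= j <= h)%N ->
  \sum_(i <= l < j.+1) r l (j - l) <= r i 0.
Proof.
move=> /andP[i_le_j j_le_h]; rewrite big_nat_recr //= subnn.
have referrers : \sum_(i <= l < j) r l (j - l) <= (2 * n * h%:R + 1) *+ (j - i).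
  rewrite -sumr_const_nat; apply: ler_sum_nat => l /andP[_ l_lt_j].
  by apply: dr_reward_referral_le_max; lia.
have split_hi : (h - i = (j - i) + (h - j))%N by lia.
apply: le_trans (lerD referrers (lexx _)) _.
by rewrite -mulr_natr /dr_reward eqxx split_hi natrD; lra.
Qed.

Lemma payoff_answer_le_report (i m : nat) : payoff_answer h r i m <= r i 0.
Proof.
rewrite /payoff_answer; case: ifP => [im_le_h|_]; last exact: dr_reward_ge0.
have -> : \sum_(0 <= l < m.+1) r (i + l) (m - l) =
          \sum_(i <= l < (i + m).+1) r l (i + m - l).
  rewrite -{2}[i]add0n big_addn (_ : (i + m).+1 - i = m.+1)%N; last lia.
  by apply: eq_big_nat => l _; rewrite (addnC l) subnDl.
by apply: chain_payment_le_report; lia.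
Qed.

Lemma exp_cost_dr_reward_le : exp_cost n^-1 h r <= 3 * n * h%:R ^+ 2.
Proof.
apply: le_trans (_ : exp_cost n^-1 h r <= r 1 0) _.
  rewrite /exp_cost; apply: (geometric_average_le p_le1); first exact: dr_reward_ge0.
  move=> J J_range; apply: ler_wpM2l; first exact: geometric_weight_ge0.
  exact: chain_payment_le_report.
rewrite /dr_reward eqxx natrB // expr2.
have h_ge1R : 1 <= h%:R :> R by rewrite ler1n.
have : h%:R <= n * h%:R :> R by rewrite ler_pMl //; lra.
nra.
Qed.

(** Rewards of the [k + 1] identities at positions [i, ..., i + k] when the
    answer lies [t] steps past the last of them. *)
Lemma sybil_chain_reward_far (i k t : nat) : (2 <= t)%N ->
  \sum_(0 <= m < k.+1) r (i + m) (t + k - m) = k.+1%:R.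
Proof.
move=> t_ge2; rewrite -[k.+1 in RHS]subn0 -sumr_const_nat.
apply: eq_big_nat => m /andP[_ m_le_k]; rewrite /dr_reward.
by rewrite ifN_eq; [rewrite ifN_eq //|]; apply/eqP; lia.
Qed.

Lemma sybil_chain_reward_next (i k : nat) :
  \sum_(0 <= m < k.+1) r (i + m) (1 + k - m) = k%:R + 2 * n * (h - (i + k))%:R.
Proof.
rewrite big_nat_recr //= addnK; congr (_ + _).
rewrite -[in RHS](subn0 k) -sumr_const_nat.
apply: eq_big_nat => m /andP[_ m_lt_k]; rewrite /dr_reward.
by rewrite ifN_eq; [rewrite ifN_eq //|]; apply/eqP; lia.
Qed.

Lemma payoff_prop_honest_ge0 (i : nat) : 0 <= payoff_prop n^-1 h r i 0.
Proof.
apply: sumr_ge0 => t _; case: ifP => _ //.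
by rewrite mulr_ge0 ?geometric_weight_ge0 // sumr_ge0 // => m _; apply: dr_reward_ge0.
Qed.

Lemma payoff_prop_honest_le (i : nat) :
  payoff_prop n^-1 h r i 0 <= 2 * n * (h - i)%:R + 1.
Proof.
apply: (geometric_average_le p_le1); first by rewrite addr_ge0 // !mulr_ge0.
move=> t /andP[t_ge1 _]; case: ifP => _.
  rewrite big_nat1 !addn0 subn0; apply: ler_wpM2l; first exact: geometric_weight_ge0.
  exact: dr_reward_referral_le.
by rewrite mulr_ge0 ?geometric_weight_ge0 ?addr_ge0 ?mulr_ge0.
Qed.

(** The first successor alone brings the honest propagator [2(h - i)]. *)
Lemma payoff_prop_honest_ge_referral (i : nat) :
  2 * (h - i)%:R <= payoff_prop n^-1 h r i 0.
Proof.
have [i_lt_h|h_le_i] := ltnP i h; last first.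
  by rewrite (eqP (_ : (h - i == 0)%N)) ?subn_eq0 // mulr0 payoff_prop_honest_ge0.
rewrite /payoff_prop big_ltn ?ltnS // addn0 ifT ?addn1 //.
rewrite expr0 mul1r big_nat1 addn0 subn0 /dr_reward /= -mulrA mulrCA (mulKf n_neq0).
rewrite -[X in X <= _]addr0 lerD2l sumr_ge0 // => t _; case: ifP => _ //.
by rewrite mulr_ge0 ?geometric_weight_ge0 // sumr_ge0 // => m _; apply: dr_reward_ge0.
Qed.

Lemma payoff_prop_sybil_le (i k : nat) :
  payoff_prop n^-1 h r i k.+1 <= 2 * (h - i)%:R.
Proof.
have rhs_ge0 : 0 <= 2 * (h - i)%:R :> R by rewrite mulr_ge0.
have [far|near] := ltnP h (i + k.+2).
  rewrite /payoff_prop big1_seq // => t /andP[_]; rewrite mem_index_iota.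
  by move=> /andP[t_ge1 _]; rewrite ifN // -ltnNge; lia.
rewrite /payoff_prop big_ltn ?ltnS // ifT; last lia.
rewrite expr0 mul1r sybil_chain_reward_next.
have tail : \sum_(2 <= t < h.+1) (if (i + t + k.+1 <= h)%N then
      (1 - n^-1) ^+ (t - 1) * n^-1 *
      \sum_(0 <= m < k.+2) r (i + m) (t + k.+1 - m) else 0)
    <= k.+2%:R * (1 - n^-1).
  rewrite mulrC; apply: le_trans (_ : _ <= \sum_(2 <= t < h.+1)
      (1 - n^-1) ^+ (t - 1) * n^-1 * k.+2%:R) _.
    apply: ler_sum_nat => t /andP[t_ge2 _]; case: ifP => _.
      by rewrite sybil_chain_reward_far.
    by rewrite mulr_ge0 ?geometric_weight_ge0.
  by rewrite -mulr_suml ler_wpM2r // geometric_weights_tail_le.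
apply: le_trans (lerD (lexx _) tail) _.
rewrite !natrB; try lia.
rewrite mulrDr mulrA mulrA (mulrC n^-1 2) -(mulrA 2) mulVf // mulr1.
rewrite -(addn1 k.+1) -(addn1 k) !natrD.
have : 0 <= k%:R :> R by [].
move: p_ge0; lra.
Qed.

Lemma payoff_prop_le_honest (i k : nat) :
  payoff_prop n^-1 h r i k <= payoff_prop n^-1 h r i 0.
Proof.
case: k => [//|k].
exact: le_trans (payoff_prop_sybil_le i k) (payoff_prop_honest_ge_referral i).
Qed.

Lemma dr_reward_sybil_proof : sybil_proof n^-1 h r.
Proof.
move=> i _ _; split.
- exact: dr_reward_ge0.
- exact: payoff_answer_le_report.
- move=> k; apply: le_trans (payoff_prop_le_honest i k) _.
  exact: le_trans (payoff_prop_honest_le i) (dr_reward_referral_le_report i).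
- exact: payoff_prop_honest_ge0.
- exact: payoff_prop_le_honest.
Qed.

End DirectReferralReward.

Theorem theorem1p1 (R : realFieldType) :
  exists C : R, 0 < C /\
    forall (n : R) (h : nat), 1 <= n -> (1 <= h)%N ->
      exists r : nat -> nat -> R,
        [/\ nonneg_reward h r, is_DR h r, sybil_proof n^-1 h r
          & exp_cost n^-1 h r <= C * n * (h%:R) ^+ 2].
Proof.
exists 3; split=> // n h n_ge1 h_ge1.
exists (dr_reward n h); split.
- by move=> i s _ _; apply: dr_reward_ge0; lra.
- exact: dr_reward_is_DR.
- exact: dr_reward_sybil_proof.
- exact: exp_cost_dr_reward_le.
Qed.
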